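(* Consider $J$ portfolios; portfolio $j$ consists of a set $\mathcal{I}_j$ of independent accounts with standard deviations $\sigma_i>0$ ($i\in\mathcal{I}_j$) and a dependent block $\mathcal{D}_j$ of $|\mathcal{D}_j|$ accounts whose total has standard deviation $\sigma_{\mathcal{D},j}\ge0$ (with $\sigma_{\mathcal{D},j}\sqrt{|\mathcal{D}_j|}=0$ if $\mathcal{D}_j=\emptyset$). Let $C>0$ be the budget and $V_j>0$ the variance bounds. Put $\gamma_j=\sigma_{\mathcal{D},j}\sqrt{|\mathcal{D}_j|}+\sum_{i\in\mathcal{I}_j}\sigma_i>0$ and $\epsilon_j=\gamma_j/V_j$. For a working set $\mathcal{B}\subsetneq\{1,\dots,J\}$ put $C^{\mathcal{B}}_{\mathrm{Rem}}=C-\sum_{j\in\mathcal{B}}\gamma_j\epsilon_j$, $d^{\mathcal{B}}=\sum_{j\notin\mathcal{B}}\gamma_j$, $\alpha(\mathcal{B})=C^{\mathcal{B}}_{\mathrm{Rem}}/d^{\mathcal{B}}$, and $e_j(\mathcal{B})=\epsilon_j$ if $j\in\mathcal{B}$, $e_j(\mathcal{B})=\alpha(\mathcal{B})$ if $j\notin\mathcal{B}$. The allocation $\mathbf{R}^\ast(\mathcal{B})$ assigns $R_i=\sigma_i e_j(\mathcal{B})$ realisations to $i\in\mathcal{I}_j$ and $r_j=\frac{\sigma_{\mathcal{D},j}}{\sqrt{|\mathcal{D}_j|}}e_j(\mathcal{B})$ to each account of $\mathcal{D}_j$; under it the variance of the estimator of portfolio $j$'s expected collections is $\operatorname{Var}_{\mathcal{B}}(\hat\mu_j)=\sigma^2_{\mathcal{D},j}/r_j+\sum_{i\in\mathcal{I}_j}\sigma_i^2/R_i=\gamma_j/e_j(\mathcal{B})$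 when $e_j(\mathcal{B})>0$, and we set $\operatorname{Var}_{\mathcal{B}}(\hat\mu_j)=+\infty$ if $e_j(\mathcal{B})\le0$ (no budget left). Suppose $\alpha(\mathcal{B})>0$, that at least two indices lie outside $\mathcal{B}$, and that some $j'\notin\mathcal{B}$ has $\operatorname{Var}_{\mathcal{B}}(\hat\mu_{j'})>V_{j'}$. Let $\mathcal{B}^+=\mathcal{B}\cup\{j'\}$. Then for every $j\notin\mathcal{B}^+$, $\operatorname{Var}_{\mathcal{B}^+}(\hat\mu_j)>\operatorname{Var}_{\mathcal{B}}(\hat\mu_j)$.
   Context: This concerns the relaxed allocation problem: choose positive reals $r_j$ (common realisation number for accounts of $\mathcal{D}_j$) and $R_i$ ($i\in\mathcal{I}=\cup_j\mathcal{I}_j$) to minimise $\sum_j\big(\sigma^2_{\mathcal{D},j}/r_j+\sum_{i\in\mathcal{I}_j}\sigma_i^2/R_i\big)$ subject to $\sum_j r_j|\mathcal{D}_j|+\sum_{i\in\mathcal{I}}R_i=C$ and $\sigma^2_{\mathcal{D},j}/r_j+\sum_{i\in\mathcal{I}_j}\sigma_i^2/R_i\le V_j$ for all $j$. $\mathbf{R}^\ast(\mathcal{B})$ is the solution of the stationarity equations of the Lagrangian when the constraints in $\mathcal{B}$ are active (hold with equality) and the others have zero multiplier. *)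

From HB Require Import structures.
From mathcomp Require Import all_boot all_order all_algebra.
From mathcomp Require Import reals constructive_ereal.
Set Implicit Arguments. Unset Strict Implicit. Unset Printing Implicit Defensive.
Import Order.TTheory GRing.Theory Num.Theory.
Local Open Scope ring_scope.

Section Alloc.
Variables (R : realType) (J : nat).
(* n j = |I_j| (independent accounts), @sig j i = sigma_i for i in I_j,
   m j = |D_j|, sigmaD j = sigma_{D,j}, V j = variance bound, C = budget. *)
Variables (n : 'I_J -> nat) (sig : forall j : 'I_J, 'I_(n j) -> R)
          (m : 'I_J -> nat) (sigmaD : 'I_J -> R) (V : 'I_J -> R) (C : R).

Definition gamma (j : 'I_J) : R :=
  sigmaD j * Num.sqrt ((m j)%:R) + \sum_(i : 'I_(n j)) @sig j i.

Definition eps (j : 'I_J) : R := gamma j / V j.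

Definition Crem (B : {set 'I_J}) : R := C - \sum_(j in B) gamma j * eps j.

Definition dB (B : {set 'I_J}) : R := \sum_(j in ~: B) gamma j.

Definition alpha (B : {set 'I_J}) : R := Crem B / dB B.

Definition e (B : {set 'I_J}) (j : 'I_J) : R :=
  if j \in B then eps j else alpha B.

Definition VarB (B : {set 'I_J}) (j : 'I_J) : \bar R :=
  if 0 < e B j then ((gamma j / e B j)%:E)%E else (+oo)%E.
End Alloc.

From HB Require Import structures.
From mathcomp Require Import all_boot all_order all_algebra.
From mathcomp Require Import reals constructive_ereal.
From mathcomp Require Import lra.
Set Implicit Arguments. Unset Strict Implicit. Unset Printing Implicit Defensive.
Import Order.TTheory GRing.Theory Num.Theory.
Local Open Scope ring_scope.

(* Outside the working set every portfolio gets the common level alpha(B), and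
   the violation at j' says alpha(B) < eps_j'.  Moving j' into the working set
   removes from the remaining budget the amount gamma_j' eps_j' and from the
   denominator the weight gamma_j'; since this removed part has ratio
   eps_j' > alpha(B), the new ratio alpha(B+) is strictly smaller, so the
   variance gamma_j / e_j of every remaining portfolio strictly increases. *)

Lemma ltr_ratio_remove (R : realFieldType) (c d x y : R) :
  0 < y -> 0 < d - y -> c / d < x -> (c - y * x) / (d - y) < c / d.
Proof.
move=> y_gt0 dy_gt0 lt_cd_x.
have d_gt0 : 0 < d by lra.
set a := c / d in lt_cd_x *.
have -> : c = a * d by rewrite /a divfK // gt_eqF.
rewrite ltr_pdivrMr //.
have : 0 < y * (x - a) by rewrite mulr_gt0 // subr_gt0.
lra.
Qed.

Section Allocation.
Variables (R : realType) (J : nat).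
Variables (n : 'I_J -> nat) (sig : forall j : 'I_J, 'I_(n j) -> R)
          (m : 'I_J -> nat) (sigmaD : 'I_J -> R) (V : 'I_J -> R) (C : R).

Local Notation gamma := (gamma sig m sigmaD).
Local Notation eps := (eps sig m sigmaD V).
Local Notation Crem := (Crem sig m sigmaD V C).
Local Notation dB := (dB sig m sigmaD).
Local Notation alpha := (alpha sig m sigmaD V C).
Local Notation e := (e sig m sigmaD V C).
Local Notation VarB := (VarB sig m sigmaD V C).

Hypothesis gamma_gt0 : forall j, 0 < gamma j.

Lemma Crem_setU1 (B : {set 'I_J}) (j' : 'I_J) : j' \notin B ->
  Crem (j' |: B) = Crem B - gamma j' * eps j'.
Proof. by move=> j'B; rewrite /Crem big_setU1 //= opprD addrA addrAC. Qed.

Lemma dB_setU1 (B : {set 'I_J}) (j' : 'I_J) : j' \notin B ->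
  dB (j' |: B) = dB B - gamma j'.
Proof.
move=> j'B; rewrite /dB [in RHS](bigD1 j') ?inE //= addrAC subrr add0r.
by apply: eq_bigl => k; rewrite setCU !inE andbC.
Qed.

Lemma dB_gt0 (B : {set 'I_J}) (j : 'I_J) : j \notin B -> 0 < dB B.
Proof.
move=> jB; rewrite /dB (bigD1 j) ?inE //=.
by rewrite ltr_pwDl // sumr_ge0 // => k _; apply: ltW.
Qed.

Lemma e_notin (B : {set 'I_J}) (j : 'I_J) : j \notin B -> e B j = alpha B.
Proof. by move=> jB; rewrite /e (negbTE jB). Qed.

Lemma alpha_lt_eps (B : {set 'I_J}) (j : 'I_J) :
  0 < V j -> 0 < alpha B -> j \notin B -> ((V j)%:E < VarB B j)%E ->
  alpha B < eps j.
Proof.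
move=> Vj_gt0 alpha_gt0 jB.
rewrite /VarB e_notin // alpha_gt0 lte_fin /eps ltr_pdivlMr //.
by rewrite ltr_pdivlMr // mulrC.
Qed.

Lemma alpha_setU1_lt (B : {set 'I_J}) (j j' : 'I_J) :
  j' \notin B -> j \notin j' |: B -> alpha B < eps j' ->
  alpha (j' |: B) < alpha B.
Proof.
move=> j'B jB' lt_alpha_eps.
have dB'_gt0 := dB_gt0 jB'.
rewrite dB_setU1 // in dB'_gt0.
by rewrite /alpha Crem_setU1 // dB_setU1 // ltr_ratio_remove.
Qed.

Lemma VarB_notin_lt (B B' : {set 'I_J}) (j : 'I_J) :
  j \notin B -> j \notin B' -> 0 < alpha B -> alpha B' < alpha B ->
  (VarB B j < VarB B' j)%E.
Proof.
move=> jB jB' alpha_gt0 lt_alpha.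
rewrite /VarB !e_notin // alpha_gt0.
case: ifP => [alpha'_gt0|_]; last exact: ltry.
by rewrite lte_fin ltr_pM2l // ltf_pV2.
Qed.

End Allocation.

(* Hsigma, HsigmaD and HC are subsumed by Hgamma and Halpha; Htwo only ensures
   that some j as in the conclusion exists, and that j is used directly. *)
Theorem lemma5 (R : realType) (J : nat)
  (n : 'I_J -> nat) (sigma : forall j : 'I_J, 'I_(n j) -> R)
  (m : 'I_J -> nat) (sigmaD : 'I_J -> R) (V : 'I_J -> R) (C : R)
  (Hsigma : forall (j : 'I_J) (i : 'I_(n j)), 0 < sigma j i)
  (HsigmaD : forall j, 0 <= sigmaD j)
  (HC : 0 < C) (HV : forall j, 0 < V j)
  (Hgamma : forall j, 0 < gamma sigma m sigmaD j)
  (B : {set 'I_J}) (j' : 'I_J)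
  (Halpha : 0 < alpha sigma m sigmaD V C B)
  (Htwo : (2 <= #|~: B|)%N)
  (Hj' : j' \notin B)
  (Hviol : ((V j')%:E < VarB sigma m sigmaD V C B j')%E) :
  forall j : 'I_J, j \notin j' |: B ->
    (VarB sigma m sigmaD V C B j < VarB sigma m sigmaD V C (j' |: B) j)%E.
Proof.
move=> j jB'.
have jB : j \notin B by move: jB'; rewrite in_setU1 negb_or => /andP[].
apply: VarB_notin_lt => //.
apply: (alpha_setU1_lt Hgamma Hj' jB').
exact: alpha_lt_eps.
Qed.
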